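(* Let $(S,\to)$ be a labelled transition system, $\mathcal{C}$ a consistent colouring and $s\in S$. Then a sequence $\sigma$ is a complete $\mathcal{C}$-coloured trace of $s$ if and only if $\sigma$ is a $\mathcal{C}$-coloured trace of $s$ that is infinite, or is a divergent $\mathcal{C}$-coloured trace of $s$, or is maximal in the sense that it is not a proper prefix of any $\mathcal{C}$-coloured trace of $s$.
   Context: Fix a set $\mathrm{Act}$ of actions containing a special action $\tau$. An LTS is $(S,\to)$ with $\to\subseteq S\times\mathrm{Act}\times S$. A path from $s$ is an alternating sequence $s_0,a_1,s_1,a_2,\dots$ (ending with a state if finite) with $s_0=s$ and $s_{k-1}\xrightarrow{a_k}s_k$; it is maximal if infinite or if its last state has no outgoing transitions. A colouring is a function $\mathcal{C}$ from $S$ into an arbitrary set of colours. For a path $\pi$, $\mathcal{C}(\pi)$ is obtained from $\mathcal{C}(s_0),a_1,\mathcal{C}(s_1),a_2,\dots$ by contracting every finite maximal consecutive subsequence $C,\tau,C,\tau,\dots,\tau,C$ and every infinite one $C,\tau,C,\tau,\dots$ to $C$. For $\pi$ a path from $s$, $\mathcal{C}(\pi)$ is a $\mathcal{C}$-coloured trace of $s$; it is a complete $\mathcal{C}$-coloured trace of $s$ if $\pi$ is maximal, and a divergent $\mathcal{C}$-coloured trace of $s$ if $\pi$ is infinite and $\mathcal{C}(\pi)$ is finite. $\mathcal{C}$ is consistent if any two states of equal colour have the same $\mathcal{C}$-coloured traces. *)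

From Stdlib Require Import List Arith Sorting.Sorted.
Import ListNotations.
Set Implicit Arguments.

Inductive seqx (X : Type) : Type :=
| SFin (l : list X)
| SInf (f : nat -> X).
Arguments SFin {X} l.
Arguments SInf {X} f.

Definition nth_opt {X : Type} (u : seqx X) (i : nat) : option X :=
  match u with
  | SFin l => nth_error l i
  | SInf f => Some (f i)
  end.

Section LTS.
Variables (Act : Type) (tau : Act) (St : Type) (trans : St -> Act -> St -> Prop)
          (Col : Type) (C : St -> Col).

(* A path s0,a1,s1,a2,s2,... from s0 is represented by s0 together with the
   (finite or infinite) sequence u of steps (a1,s1),(a2,s2),...
   [prev s u i] is the state s_i, i.e. the source state of step i (0-based). *)
Definition prev (s : St) (u : seqx (Act * St)) (i : nat) : St :=
  match i with
  | 0 => s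
  | S j => match nth_opt u j with Some (_, t) => t | None => s end
  end.

Definition is_path (s : St) (u : seqx (Act * St)) : Prop :=
  forall i a t, nth_opt u i = Some (a, t) -> trans (prev s u i) a t.

Definition maximal_path (s : St) (u : seqx (Act * St)) : Prop :=
  match u with
  | SInf _ => True
  | SFin l => forall a t, ~ trans (prev s u (length l)) a t
  end.

(* A C-coloured sequence C0,a1,C1,a2,C2,... is represented by its first colour
   and the (finite or infinite) sequence of pairs (a_k, C_k). *)
Definition cseq : Type := (Col * seqx (Act * Col))%type.

(* Step i of the path survives the contraction iff it is not a stuttering
   step C,tau,C (i.e. a tau-step between states of equal colour). Contracting
   every maximal block C,tau,C,...,tau,C (finite or infinite) to C amounts to
   deleting exactly these steps. *)
Definition kept (s : St) (u : seqx (Act * St)) (n : nat) : Prop :=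
  exists a t, nth_opt u n = Some (a, t) /\ (a <> tau \/ C t <> C (prev s u n)).

Definition colouring_of (s : St) (u : seqx (Act * St)) (sigma : cseq) : Prop :=
  fst sigma = C s /\
  match snd sigma with
  | SFin l =>
      exists idx : list nat,
        StronglySorted lt idx /\
        (forall n, kept s u n <-> In n idx) /\
        Forall2 (fun n x => exists a t, nth_opt u n = Some (a, t) /\ x = (a, C t)) idx l
  | SInf g =>
      exists h : nat -> nat,
        (forall k, h k < h (S k)) /\
        (forall n, kept s u n <-> exists k, h k = n) /\
        (forall k, exists a t, nth_opt u (h k) = Some (a, t) /\ g k = (a, C t))
  end.

Definition ctrace (s : St) (sigma : cseq) : Prop :=
  exists u, is_path s u /\ colouring_of s u sigma.

Definition complete_ctrace (s : St) (sigma : cseq) : Prop :=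
  exists u, is_path s u /\ maximal_path s u /\ colouring_of s u sigma.

Definition is_infinite_seq (sigma : cseq) : Prop :=
  match snd sigma with SInf _ => True | SFin _ => False end.

Definition divergent_ctrace (s : St) (sigma : cseq) : Prop :=
  exists f, is_path s (SInf f) /\ colouring_of s (SInf f) sigma /\
            ~ is_infinite_seq sigma.

Definition proper_prefix (sigma sigma' : cseq) : Prop :=
  fst sigma = fst sigma' /\
  match snd sigma, snd sigma' with
  | SFin l, SFin l' => exists m, m <> [] /\ l' = l ++ m
  | SFin l, SInf g => forall k, k < length l -> nth_error l k = Some (g k)
  | SInf _, _ => False
  end.

Definition consistent : Prop :=
  forall s1 s2, C s1 = C s2 -> forall sigma, ctrace s1 sigma <-> ctrace s2 sigma.

End LTS.

From Pilot Require Import Defs.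
From Stdlib Require Import List Arith Lia Sorting.Sorted Classical ClassicalEpsilon.
Import ListNotations.
Set Implicit Arguments.

(** Along a path, the colour only changes at kept steps, so the colour of a
    coloured trace just before its [j]-th entry is the colour of the state
    from which the [j]-th kept step of the path starts; for a finite path the
    last colour of the trace is the colour of its final state.

    If a finite maximal path had a coloured trace [σ] properly extended by a
    trace [σ'], the extra entry of [σ'] is a kept step from a state of the same
    colour as the deadlocked final state; by consistency that state would then
    have a transition too.

    Conversely, if a finite path [π] has a coloured trace [σ] that cannot be
    properly extended, every step enabled at the end of [π] is stuttering
    (else it extends [σ]). Appending stuttering steps either reaches a deadlock
    or, by dependent choice, goes on forever; either way the result is a
    maximal path with trace [σ]. *)

Lemma nth_opt_prefix_closed (X : Type) (u : seqx X) i j x :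
  nth_opt u j = Some x -> i <= j -> exists y, nth_opt u i = Some y.
Proof.
  destruct u as [l|f]; simpl; intros E Hij; [|eauto].
  destruct (nth_error l i) eqn:Ei; [eauto|].
  apply nth_error_None in Ei.
  assert (j < length l) by (apply nth_error_Some; congruence). lia.
Qed.

Lemma nth_error_app_map_seq (X : Type) (l : list X) (f : nat -> X) N i :
  i < length l + N ->
  nth_error (l ++ map f (seq 0 N)) i = Some (nth i l (f (i - length l))).
Proof.
  intros Hi. destruct (Nat.lt_ge_cases i (length l)).
  - rewrite nth_error_app1 by lia. apply nth_error_nth'. lia.
  - rewrite nth_error_app2, nth_overflow, nth_error_map, nth_error_seq by lia.
    replace (i - length l <? N) with true by (symmetry; apply Nat.ltb_lt; lia).
    reflexivity.
Qed.

Lemma snoc_chain (X : Type) (P : list X -> Prop) :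
  P [] -> (forall m, P m -> exists x, P (m ++ [x])) ->
  exists f : nat -> X, forall n, P (map f (seq 0 n)).
Proof.
  intros P0 HP. destruct (HP [] P0) as [x0 _].
  assert (Hnext : forall m, exists x, P m -> P (m ++ [x])).
  { intros m. destruct (classic (P m)) as [Pm|NPm].
    - destruct (HP m Pm) as [x Px]. eauto.
    - exists x0. tauto. }
  set (next m := proj1_sig (constructive_indefinite_description _ (Hnext m))).
  set (pre n := nat_rect (fun _ => list X) [] (fun _ m => m ++ [next m]) n).
  exists (fun n => next (pre n)).
  assert (Hpre : forall n, pre n = map (fun n => next (pre n)) (seq 0 n)).
  { induction n as [|n IH]; [reflexivity|].
    rewrite seq_S, map_app, <- IH. reflexivity. }
  intros n. rewrite <- Hpre. induction n as [|n IH]; [exact P0|].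
  exact (proj2_sig (constructive_indefinite_description _ (Hnext (pre n))) IH).
Qed.

Lemma StronglySorted_lt_nth (l : list nat) i j :
  StronglySorted lt l -> i < j -> j < length l -> nth i l 0 < nth j l 0.
Proof.
  intros H; revert i j.
  induction H as [|x l H IH Hf]; simpl; intros i j Hij Hj; [lia|].
  destruct j as [|j]; [lia|]. destruct i as [|i].
  - rewrite Forall_forall in Hf. apply Hf, nth_In. lia.
  - apply IH; lia.
Qed.

Lemma StronglySorted_lt_snoc (l : list nat) N :
  StronglySorted lt l -> (forall k, In k l -> k < N) -> StronglySorted lt (l ++ [N]).
Proof.
  induction 1 as [|x l H IH Hf]; intros Hb; simpl.
  - repeat constructor.
  - constructor.
    + apply IH. intros; apply Hb; simpl; auto.
    + apply Forall_app; split; auto. constructor; [apply Hb; simpl; auto|constructor].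
Qed.

Lemma Forall2_nth_error (X Y : Type) (R : X -> Y -> Prop) xs ys j y d :
  Forall2 R xs ys -> nth_error ys j = Some y -> j < length xs /\ R (nth j xs d) y.
Proof.
  intros H; revert j.
  induction H as [|x y' xs ys Hxy H IH]; intros j E; [destruct j; discriminate|].
  destruct j as [|j]; simpl in *.
  - injection E as <-. split; [lia|auto].
  - destruct (IH j E). split; [lia|auto].
Qed.

Lemma Forall2_impl_In (X Y : Type) (R R' : X -> Y -> Prop) xs ys :
  (forall x y, In x xs -> R x y -> R' x y) -> Forall2 R xs ys -> Forall2 R' xs ys.
Proof.
  intros HR H. induction H; constructor.
  - apply HR; simpl; auto.
  - apply IHForall2. intros; apply HR; simpl; auto.
Qed.

Section ColouredTraces.
Variables (Act : Type) (tau : Act) (St : Type) (trans : St -> Act -> St -> Prop)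
          (Col : Type) (C : St -> Col).

Local Notation kept := (kept tau C).
Local Notation is_path := (is_path trans).
Local Notation colouring_of := (colouring_of tau C).
Local Notation ctrace := (ctrace tau trans C).

Lemma prev_agree (s : St) (u u' : seqx (Act * St)) i :
  (forall j, j < i -> nth_opt u j = nth_opt u' j) -> prev s u i = prev s u' i.
Proof. intros H. destruct i; simpl; [reflexivity|]. rewrite H; auto. Qed.

Lemma kept_agree (s : St) (u u' : seqx (Act * St)) n :
  (forall j, j <= n -> nth_opt u j = nth_opt u' j) -> kept s u n <-> kept s u' n.
Proof.
  intros H. unfold Defs.kept.
  rewrite (H n), (@prev_agree s u u' n) by (auto; intros; apply H; lia).
  reflexivity.
Qed.

Lemma kept_fin_lt s lu n : kept s (SFin lu) n -> n < length lu.
Proof. intros [a [t [E _]]]. simpl in E. apply nth_error_Some. congruence. Qed.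

Lemma kept_app s (lu m : list (Act * St)) n :
  n < length lu -> kept s (SFin (lu ++ m)) n <-> kept s (SFin lu) n.
Proof.
  intros Hn. apply kept_agree. intros j Hj. simpl. rewrite nth_error_app1 by lia. reflexivity.
Qed.

Lemma prev_colour_unkept (s : St) (u : seqx (Act * St)) m n :
  m <= n ->
  (forall i, i < n -> exists p, nth_opt u i = Some p) ->
  (forall i, m <= i -> i < n -> ~ kept s u i) ->
  C (prev s u n) = C (prev s u m).
Proof.
  induction n as [|n IH]; intros Hmn Hdef Hunkept.
  - replace m with 0 by lia. reflexivity.
  - destruct (Nat.eq_dec m (S n)) as [->|]; [reflexivity|].
    destruct (Hdef n ltac:(lia)) as [[a t] E].
    rewrite <- IH by (auto; lia). simpl. rewrite E.
    apply NNPP. intros Hneq. apply (Hunkept n); [lia|lia|]. exists a, t. auto.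
Qed.

(** [K j] is the position in the path [u] of the [j]-th entry of the coloured
    sequence [sq]. *)
Record enumeration (s : St) (u : seqx (Act * St)) (sq : seqx (Act * Col))
    (K : nat -> nat) : Prop := {
  enum_step : forall j x, nth_opt sq j = Some x ->
    exists a t, nth_opt u (K j) = Some (a, t) /\ x = (a, C t) /\ kept s u (K j);
  enum_onto : forall i, kept s u i -> exists j x, nth_opt sq j = Some x /\ K j = i;
  enum_mono : forall j1 j2 x, j1 < j2 -> nth_opt sq j2 = Some x -> K j1 < K j2
}.

Lemma colouring_enumeration s u sigma :
  colouring_of s u sigma -> exists K, enumeration s u (snd sigma) K.
Proof.
  intros [_ H]. destruct (snd sigma) as [l|g].
  - destruct H as [idx [Hsorted [Hkept HF]]]. exists (fun j => nth j idx 0).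
    pose proof (Forall2_length HF) as Hlen. split.
    + intros j x E. destruct (Forall2_nth_error j 0 HF E) as [Hj [a [t [E1 E2]]]].
      exists a, t. repeat split; auto. apply Hkept, nth_In. exact Hj.
    + intros i Ki. apply Hkept, In_nth with (d := 0) in Ki as [j [Hj <-]].
      destruct (nth_error l j) as [x|] eqn:E; [eauto|].
      apply nth_error_None in E. lia.
    + intros j1 j2 x Hlt E. simpl in E.
      apply StronglySorted_lt_nth; auto.
      rewrite Hlen. apply nth_error_Some. congruence.
  - destruct H as [h [Hinc [Hkept Hg]]]. exists h. split.
    + intros j x E. injection E as <-.
      destruct (Hg j) as [a [t [E1 E2]]]. exists a, t. repeat split; auto.
      apply Hkept. eauto.
    + intros i Ki. apply Hkept in Ki as [j <-]. exists j, (g j). auto.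
    + intros j1 j2 x Hlt _. induction Hlt as [|j2 _ IH]; [apply Hinc|].
      specialize (Hinc j2). lia.
Qed.

Lemma enumeration_index_lt s u sq K j1 j2 x :
  enumeration s u sq K -> nth_opt sq j1 = Some x -> K j1 < K j2 -> j1 < j2.
Proof.
  intros HK E Hlt. destruct (Nat.lt_ge_cases j1 j2) as [|Hge]; [assumption|].
  destruct (Nat.eq_dec j1 j2) as [->|]; [lia|].
  assert (Hlt' : j2 < j1) by lia. pose proof (enum_mono HK Hlt' E). lia.
Qed.

Lemma colouring_fin_path_fin s lu sigma :
  colouring_of s (SFin lu) sigma -> exists l, snd sigma = SFin l.
Proof.
  intros Hc. destruct (colouring_enumeration Hc) as [K HK].
  destruct (snd sigma) as [l|g]; [eauto|exfalso].
  assert (HKj : forall j, j <= K j).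
  { induction j as [|j IH]; [lia|].
    pose proof (enum_mono HK (x := g (S j)) (Nat.lt_succ_diag_r j) eq_refl). lia. }
  destruct (enum_step HK (length lu) eq_refl) as [a [t [E _]]].
  simpl in E. assert (K (length lu) < length lu) by (apply nth_error_Some; congruence).
  specialize (HKj (length lu)). lia.
Qed.

(** [c] is the colour just before the [j]-th (0-based) action of the
    coloured sequence [(c0, sq)]. *)
Definition colour_at (c0 : Col) (sq : seqx (Act * Col)) (j : nat) (c : Col) : Prop :=
  match j with 0 => c = c0 | S j0 => exists a, nth_opt sq j0 = Some (a, c) end.

Lemma colour_at_functional c0 sq j c1 c2 :
  colour_at c0 sq j c1 -> colour_at c0 sq j c2 -> c1 = c2.
Proof.
  destruct j; simpl; [congruence|]. intros [a1 E1] [a2 E2]. rewrite E1 in E2. congruence.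
Qed.

Lemma colour_at_prev s u sq K j i :
  enumeration s u sq K ->
  (forall i', i' < i -> exists p, nth_opt u i' = Some p) ->
  (forall j', j' < j -> nth_opt sq j' <> None /\ K j' < i) ->
  (forall n, n < i -> kept s u n -> exists j', j' < j /\ K j' = n) ->
  colour_at (C s) sq j (C (prev s u i)).
Proof.
  intros HK Hdef Hbefore Hall. destruct j as [|j0]; simpl.
  - apply prev_colour_unkept with (m := 0); [lia|exact Hdef|].
    intros n _ Hn Kn. destruct (Hall n Hn Kn) as [j' [Hj' _]]. lia.
  - destruct (Hbefore j0 ltac:(lia)) as [Hdef0 Hlt0].
    destruct (nth_opt sq j0) as [x0|] eqn:E0; [|congruence].
    destruct (enum_step HK j0 E0) as [a0 [t0 [Et0 [-> _]]]].
    exists a0. rewrite (prev_colour_unkept (m := S (K j0)) (n := i)).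
    + simpl. rewrite Et0. reflexivity.
    + lia.
    + exact Hdef.
    + intros n Hn1 Hn2 Kn. destruct (Hall n Hn2 Kn) as [j' [Hj' <-]].
      destruct (Nat.eq_dec j' j0) as [->|]; [lia|].
      assert (Hlt' : j' < j0) by lia. pose proof (enum_mono HK Hlt' E0). lia.
Qed.

Lemma colour_at_kept s u sq K j x :
  enumeration s u sq K -> nth_opt sq j = Some x ->
  colour_at (C s) sq j (C (prev s u (K j))).
Proof.
  intros HK E. destruct (enum_step HK j E) as [a [t [Et _]]].
  apply colour_at_prev with K; auto.
  - intros i Hi. eapply nth_opt_prefix_closed; eauto. lia.
  - intros j' Hj'. destruct (nth_opt_prefix_closed sq E (i := j') ltac:(lia)) as [y Ey].
    split; [congruence|]. exact (enum_mono HK Hj' E).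
  - intros n Hn Kn. destruct (enum_onto HK Kn) as [j' [x' [E' <-]]].
    exists j'. split; auto. eapply enumeration_index_lt; eauto.
Qed.

Lemma colour_at_final s lu l K :
  enumeration s (SFin lu) (SFin l) K ->
  colour_at (C s) (SFin l) (length l) (C (prev s (SFin lu) (length lu))).
Proof.
  intros HK. apply colour_at_prev with K; auto.
  - intros i Hi. simpl. destruct (nth_error lu i) as [p|] eqn:E; [eauto|].
    apply nth_error_None in E. lia.
  - intros j' Hj'. simpl. split; [apply nth_error_Some; exact Hj'|].
    destruct (nth_error l j') as [x|] eqn:E; [|apply nth_error_None in E; lia].
    destruct (enum_step HK j' E) as [a [t [Et Hk]]].
    apply kept_fin_lt with s. apply Hk.
  - intros n _ Kn. destruct (enum_onto HK Kn) as [j' [x' [E' <-]]].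
    exists j'. split; auto. apply nth_error_Some. simpl in E'. congruence.
Qed.

Lemma ctrace_single_step P a t :
  trans P a t -> (a <> tau \/ C t <> C P) -> ctrace P (C P, SFin [(a, C t)]).
Proof.
  intros Ht Hk. exists (SFin [(a, t)]). split.
  - intros [|[|i]] b t' E; simpl in E; try discriminate. injection E as <- <-. exact Ht.
  - split; [reflexivity|]. exists [0]. split; [repeat constructor|split].
    + intros n. split.
      * intros [b [t' [E _]]]. destruct n as [|[|n]]; simpl in E; try discriminate. left; reflexivity.
      * intros [<-|[]]. exists a, t. auto.
    + repeat constructor. exists a, t. auto.
Qed.

Lemma ctrace_cons_enabled P c x l :
  ctrace P (c, SFin (x :: l)) -> exists a t, trans P a t.
Proof.
  intros [u [Hp Hc]]. destruct (colouring_enumeration Hc) as [K HK].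
  destruct (enum_step HK 0 (x := x) eq_refl) as [a [t [E _]]].
  destruct (nth_opt_prefix_closed u E (i := 0) ltac:(lia)) as [[b t'] E0].
  exists b, t'. exact (Hp 0 b t' E0).
Qed.

Lemma proper_prefix_next c l sigma' :
  proper_prefix (c, SFin l) sigma' ->
  exists x, nth_opt (snd sigma') (length l) = Some x /\
    forall c', colour_at c (SFin l) (length l) c' -> colour_at c (snd sigma') (length l) c'.
Proof.
  intros [_ Hpre]. simpl in Hpre.
  destruct (snd sigma') as [l'|g]; simpl.
  - destruct Hpre as [[|y m] [Hm ->]]; [congruence|].
    exists y. rewrite nth_error_app2, Nat.sub_diag by lia. split; [reflexivity|].
    intros c'. destruct (length l) as [|j0] eqn:Hl; simpl; [auto|].
    intros [a E]. exists a. rewrite nth_error_app1 by lia. exact E.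
  - exists (g (length l)). split; [reflexivity|].
    intros c'. destruct (length l) as [|j0] eqn:Hl; simpl; [auto|].
    intros [a E]. exists a. rewrite Hpre in E by lia. congruence.
Qed.

Lemma maximal_fin_path_unextendable s lu sigma :
  consistent tau trans C ->
  is_path s (SFin lu) -> maximal_path trans s (SFin lu) -> colouring_of s (SFin lu) sigma ->
  ~ exists sigma', ctrace s sigma' /\ proper_prefix sigma sigma'.
Proof.
  intros Hcons Hp Hmax Hc [sigma' [[u' [Hp' Hc']] Hpre]].
  destruct (colouring_fin_path_fin Hc) as [l Hl].
  destruct sigma as [c sq]. simpl in Hl. subst sq.
  pose proof (proj1 Hc) as Hfst. simpl in Hfst. subst c.
  destruct (colouring_enumeration Hc) as [K HK].
  destruct (colouring_enumeration Hc') as [K' HK'].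
  destruct (proper_prefix_next Hpre) as [x [Ex Hcol]].
  assert (Hsame : C (prev s (SFin lu) (length lu)) = C (prev s u' (K' (length l)))).
  { eapply colour_at_functional; [apply Hcol, (colour_at_final HK)|].
    exact (colour_at_kept _ HK' Ex). }
  destruct (enum_step HK' _ Ex) as [a [t [Et [_ [a' [t' [Et' Hk]]]]]]].
  rewrite Et in Et'. injection Et' as <- <-.
  pose proof (ctrace_single_step (Hp' _ _ _ Et) Hk) as Hstep.
  apply (Hcons _ _ (eq_sym Hsame)) in Hstep.
  destruct (ctrace_cons_enabled Hstep) as [b [t'' Htr]].
  exact (Hmax b t'' Htr).
Qed.

Lemma colouring_of_transfer s u u' sigma :
  (forall n, kept s u' n <-> kept s u n) ->
  (forall n, kept s u n -> nth_opt u' n = nth_opt u n) ->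
  colouring_of s u sigma -> colouring_of s u' sigma.
Proof.
  intros Hk Hn [Hfst H]. split; [exact Hfst|]. destruct (snd sigma) as [l|g].
  - destruct H as [idx [Hs [Hi HF]]]. exists idx. split; [exact Hs|split].
    + intros n. rewrite Hk. apply Hi.
    + revert HF. apply Forall2_impl_In. intros n x Hin [a [t [E1 E2]]].
      exists a, t. rewrite Hn by (apply Hi; exact Hin). auto.
  - destruct H as [h [Hm [Hi Hg]]]. exists h. split; [exact Hm|split].
    + intros n. rewrite Hk. apply Hi.
    + intros k. destruct (Hg k) as [a [t [E1 E2]]].
      exists a, t. rewrite Hn by (apply Hi; eauto). auto.
Qed.

Lemma is_path_snoc s (lu : list (Act * St)) a t :
  is_path s (SFin lu) -> trans (prev s (SFin lu) (length lu)) a t ->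
  is_path s (SFin (lu ++ [(a, t)])).
Proof.
  intros Hp Ht i b t' E. simpl in E.
  assert (Hi : i < S (length lu)).
  { replace (S (length lu)) with (length (lu ++ [(a, t)])) by (rewrite length_app; simpl; lia).
    apply nth_error_Some. congruence. }
  rewrite (prev_agree s (SFin (lu ++ [(a, t)])) (SFin lu)).
  - destruct (Nat.lt_ge_cases i (length lu)).
    + rewrite nth_error_app1 in E by lia. exact (Hp i b t' E).
    + replace i with (length lu) in * by lia.
      rewrite nth_error_app2, Nat.sub_diag in E by lia. injection E as <- <-. exact Ht.
  - intros j Hj. simpl. rewrite nth_error_app1 by lia. reflexivity.
Qed.

Lemma ctrace_snoc_kept s (lu : list (Act * St)) c l a t :
  is_path s (SFin lu) -> colouring_of s (SFin lu) (c, SFin l) ->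
  trans (prev s (SFin lu) (length lu)) a t ->
  kept s (SFin (lu ++ [(a, t)])) (length lu) ->
  ctrace s (c, SFin (l ++ [(a, C t)])).
Proof.
  intros Hp [Hfst [idx [Hs [Hi HF]]]] Ht Hk. exists (SFin (lu ++ [(a, t)])).
  split; [apply is_path_snoc; assumption|]. split; [exact Hfst|]. simpl.
  assert (Hbound : forall k, In k idx -> k < length lu)
    by (intros k Hin; apply Hi, kept_fin_lt in Hin; exact Hin).
  exists (idx ++ [length lu]). split; [apply StronglySorted_lt_snoc; assumption|split].
  - intros n. rewrite in_app_iff. simpl.
    destruct (Nat.lt_total n (length lu)) as [Hl|[->|Hg]].
    + rewrite kept_app, Hi by exact Hl. split; [tauto|]. intros [?|[?|[]]]; [assumption|lia].
    + split; auto.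
    + split.
      * intros Hk'. apply kept_fin_lt in Hk'. rewrite length_app in Hk'. simpl in Hk'. lia.
      * intros [Hin|[?|[]]]; [apply Hbound in Hin|]; lia.
  - apply Forall2_app.
    + revert HF. apply Forall2_impl_In. intros n x Hin [a' [t' [E1 E2]]].
      exists a', t'. simpl. rewrite nth_error_app1 by (apply Hbound; exact Hin). auto.
    + repeat constructor. exists a, t. simpl.
      rewrite nth_error_app2, Nat.sub_diag by lia. auto.
Qed.

Lemma inf_path_complete_ctrace s f sigma :
  is_path s (SInf f) -> colouring_of s (SInf f) sigma -> complete_ctrace tau trans C s sigma.
Proof. intros Hp Hc. exists (SInf f). split; [exact Hp|split; [exact I|exact Hc]]. Qed.

Definition stutter_ext (s : St) (lu m : list (Act * St)) : Prop :=
  is_path s (SFin (lu ++ m)) /\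
  forall n, length lu <= n -> ~ kept s (SFin (lu ++ m)) n.

Lemma stutter_ext_nil s lu : is_path s (SFin lu) -> stutter_ext s lu [].
Proof.
  intros Hp. unfold stutter_ext. rewrite app_nil_r.
  split; [exact Hp|]. intros n Hn Kn. apply kept_fin_lt in Kn. lia.
Qed.

Lemma stutter_ext_kept s lu m n :
  stutter_ext s lu m -> kept s (SFin (lu ++ m)) n <-> kept s (SFin lu) n.
Proof.
  intros [_ Hunkept]. destruct (Nat.lt_ge_cases n (length lu)) as [Hn|Hn].
  - apply kept_app. exact Hn.
  - split; intros Kn; [exfalso; exact (Hunkept n Hn Kn)|].
    apply kept_fin_lt in Kn. lia.
Qed.

Lemma stutter_ext_colouring s lu m sigma :
  stutter_ext s lu m -> colouring_of s (SFin lu) sigma -> colouring_of s (SFin (lu ++ m)) sigma.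
Proof.
  intros Hm. apply colouring_of_transfer.
  - intros n. apply stutter_ext_kept. exact Hm.
  - intros n Kn. apply kept_fin_lt in Kn. simpl. apply nth_error_app1. exact Kn.
Qed.

Lemma stutter_ext_snoc s lu sigma m a t :
  colouring_of s (SFin lu) sigma ->
  ~ (exists sigma', ctrace s sigma' /\ proper_prefix sigma sigma') ->
  stutter_ext s lu m ->
  trans (prev s (SFin (lu ++ m)) (length (lu ++ m))) a t ->
  stutter_ext s lu (m ++ [(a, t)]).
Proof.
  intros Hc Hno Hm Ht. unfold stutter_ext. rewrite app_assoc.
  split; [apply is_path_snoc; [apply Hm|exact Ht]|].
  intros n Hn Kn.
  destruct (Nat.lt_total n (length (lu ++ m))) as [Hl|[->|Hg]].
  - rewrite kept_app in Kn by exact Hl. exact (proj2 Hm n Hn Kn).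
  - apply Hno. destruct (colouring_fin_path_fin Hc) as [l Hl].
    destruct sigma as [c sq]. simpl in Hl. subst sq.
    exists (c, SFin (l ++ [(a, C t)])). split.
    + apply ctrace_snoc_kept with (lu ++ m); [apply Hm|apply stutter_ext_colouring; auto|auto|auto].
    + split; [reflexivity|]. exists [(a, C t)]. split; [discriminate|reflexivity].
  - apply kept_fin_lt in Kn. rewrite length_app in Kn. simpl in Kn. lia.
Qed.

Lemma stutter_ext_infinite s lu sigma (f : nat -> Act * St) :
  colouring_of s (SFin lu) sigma ->
  (forall n, stutter_ext s lu (map f (seq 0 n))) ->
  complete_ctrace tau trans C s sigma.
Proof.
  intros Hc Hf.
  set (g i := nth i lu (f (i - length lu))).
  assert (Hagree : forall N j, j < length lu + N ->
            nth_opt (SInf g) j = nth_opt (SFin (lu ++ map f (seq 0 N))) j).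
  { intros N j Hj. simpl. rewrite nth_error_app_map_seq by exact Hj. reflexivity. }
  assert (Hprefix : forall n j, j <= n ->
            nth_opt (SInf g) j = nth_opt (SFin (lu ++ map f (seq 0 (S n)))) j)
    by (intros; apply Hagree; lia).
  apply inf_path_complete_ctrace with g.
  - intros i a t E.
    rewrite (prev_agree s (SInf g) (SFin (lu ++ map f (seq 0 (S i)))))
      by (intros; apply Hprefix; lia).
    apply (proj1 (Hf (S i))). rewrite <- Hprefix by lia. exact E.
  - apply colouring_of_transfer with (SFin lu); [| |exact Hc].
    + intros n. rewrite (kept_agree s (SInf g) (SFin (lu ++ map f (seq 0 (S n)))))
        by (intros; apply Hprefix; lia).
      apply stutter_ext_kept, Hf.
    + intros n Kn. pose proof (kept_fin_lt Kn).
      rewrite (Hagree 0) by lia. simpl. rewrite app_nil_r. reflexivity.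
Qed.

Lemma unextendable_fin_ctrace_complete s lu sigma :
  is_path s (SFin lu) -> colouring_of s (SFin lu) sigma ->
  ~ (exists sigma', ctrace s sigma' /\ proper_prefix sigma sigma') ->
  complete_ctrace tau trans C s sigma.
Proof.
  intros Hp Hc Hno.
  destruct (classic (exists m, stutter_ext s lu m /\
      forall a t, ~ trans (prev s (SFin (lu ++ m)) (length (lu ++ m))) a t))
    as [[m [Hm Hdead]]|Hlive].
  - exists (SFin (lu ++ m)). split; [apply Hm|split; [exact Hdead|]].
    apply stutter_ext_colouring; assumption.
  - destruct (snoc_chain (stutter_ext s lu) (stutter_ext_nil Hp)) as [f Hf].
    + intros m Hm. apply NNPP. intros Hstuck. apply Hlive.
      exists m. split; [exact Hm|]. intros a t Ht.
      apply Hstuck. exists (a, t). eapply stutter_ext_snoc; eassumption.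
    + exact (stutter_ext_infinite f Hc Hf).
Qed.

End ColouredTraces.

Theorem lemma3p7 (Act : Type) (tau : Act) (St : Type)
    (trans : St -> Act -> St -> Prop) (Col : Type) (C : St -> Col) :
  consistent tau trans C ->
  forall (s : St) (sigma : cseq Act Col),
    complete_ctrace tau trans C s sigma <->
    ((ctrace tau trans C s sigma /\ is_infinite_seq sigma) \/
     divergent_ctrace tau trans C s sigma \/
     (ctrace tau trans C s sigma /\
      ~ (exists sigma', ctrace tau trans C s sigma' /\ proper_prefix sigma sigma'))).
Proof.
  intros Hcons s sigma. split.
  - intros [[lu|f] [Hp [Hmax Hc]]].
    + right; right. split; [exists (SFin lu); auto|].
      exact (maximal_fin_path_unextendable Hcons Hp Hmax Hc).
    + destruct (snd sigma) eqn:Hsq.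
      * right; left. exists f. unfold is_infinite_seq. rewrite Hsq. auto.
      * left. split; [exists (SInf f); auto|]. unfold is_infinite_seq. rewrite Hsq. exact I.
  - intros [[[u [Hp Hc]] Hinf]|[[f [Hp [Hc _]]]|[[u [Hp Hc]] Hno]]].
    + destruct u as [lu|f]; [|exact (inf_path_complete_ctrace Hp Hc)].
      destruct (colouring_fin_path_fin Hc) as [l Hl].
      unfold is_infinite_seq in Hinf. rewrite Hl in Hinf. destruct Hinf.
    + exact (inf_path_complete_ctrace Hp Hc).
    + destruct u as [lu|f]; [|exact (inf_path_complete_ctrace Hp Hc)].
      exact (unextendable_fin_ctrace_complete Hp Hc Hno).
Qed.
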